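(* Let $N=2^n$, let $u$ be a uniformly random permutation of $\{0,\dots,N-1\}$, let $g$ be an arbitrary function on permutations, fix $\delta>0$, $\gamma=2^{-m}>0$ and a value $r'$ with $\Pr[g(u)=r']\ge\gamma$. Let $t$ denote $u$ conditioned on $g(u)=r'$. Then there are finitely many distributions $\mathbb{F}_1,\mathbb{F}_2,\dots$ on permutations, each $(p,\delta)$ non-uniform with $p=2m/\delta$, an arbitrary distribution $\mathbb{F}'$ on permutations, and nonnegative weights $\alpha_i,\gamma'$ with $\sum_i\alpha_i+\gamma'=1$ and $\gamma'\le\gamma$, such that the distribution of $t$ equals $\sum_i\alpha_i\mathbb{F}_i+\gamma'\mathbb{F}'$.
   Context: A part is a set $S=\{(x_i,y_i)\}_{i=1}^M$ ($M\le N$) such that some permutation $\pi$ of $\{0,\dots,N-1\}$ satisfies $\pi(x_i)=y_i$ for all $i$; for a permutation $t$, $\mathrm{parts}(t)=\{(x,t(x))\}_x$ and ''$S\subseteq\mathrm{parts}(t)$'' means $t(x_i)=y_i$ for all $i$. Two parts $S,S'$ are distinct if they share no input $x$ and $S\cup S'$ is again a part. For uniform $u$, $\Pr[S\subseteq\mathrm{parts}(u)]=(N-|S|)!/N!$. A distribution of a random permutation $t$ is $\delta$ non-uniform if $\Pr[S\subseteq\mathrm{parts}(t)]\le2^{\delta|S|}\Pr[S\subseteq\mathrm{parts}(u)]$ for every part $S$. It is $(p,\delta)$ non-uniform if there is a part $S_0$ with $|S_0|\le p$ and $\Pr[S_0\subseteq\mathrm{parts}(t)]=1$ such that for every part $S$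 distinct from $S_0$, $\Pr[S\subseteq\mathrm{parts}(t)]\le2^{\delta|S|}\Pr[S\subseteq\mathrm{parts}(u)\mid S_0\subseteq\mathrm{parts}(u)]$, where $\Pr[S\subseteq\mathrm{parts}(u)\mid S_0\subseteq\mathrm{parts}(u)]=(N-|S_0|-|S|)!/(N-|S_0|)!$. *)

From HB Require Import structures.
From mathcomp Require Import all_boot all_order all_algebra all_fingroup.
From mathcomp Require Import reals exp.
Set Implicit Arguments. Unset Strict Implicit. Unset Printing Implicit Defensive.
Import Order.TTheory GRing.Theory Num.Theory.
Local Open Scope ring_scope.

Section Defs.
Variable R : realType.
Variable N : nat.

Definition perm_dist (D : {perm 'I_N} -> R) : Prop :=
  (forall s, 0 <= D s) /\ \sum_(s : {perm 'I_N}) D s = 1.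

Definition in_parts (S : {set 'I_N * 'I_N}) (s : {perm 'I_N}) : bool :=
  [forall xy in S, s xy.1 == xy.2].

Definition is_part (S : {set 'I_N * 'I_N}) : bool :=
  [exists s : {perm 'I_N}, in_parts S s].

Definition distinct_parts (S S' : {set 'I_N * 'I_N}) : bool :=
  [forall xy in S, forall xy' in S', xy.1 != xy'.1] && is_part (S :|: S').

Definition prob_part (D : {perm 'I_N} -> R) (S : {set 'I_N * 'I_N}) : R :=
  \sum_(s : {perm 'I_N} | in_parts S s) D s.

(* Pr[S \subseteq parts(u) | S0 \subseteq parts(u)] for uniform u *)
Definition unif_cond (S0 S : {set 'I_N * 'I_N}) : R :=
  (N - #|S0| - #|S|)`!%:R / (N - #|S0|)`!%:R.

Definition pd_nonuniform (p delta : R) (D : {perm 'I_N} -> R) : Prop :=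
  exists S0 : {set 'I_N * 'I_N},
    [/\ is_part S0, (#|S0|%:R <= p), prob_part D S0 = 1 &
        forall S : {set 'I_N * 'I_N}, is_part S -> distinct_parts S S0 ->
          prob_part D S <= powR 2 (delta * #|S|%:R) * unif_cond S0 S].

Definition cond_unif (T : eqType) (g : {perm 'I_N} -> T) (r' : T)
  : {perm 'I_N} -> R :=
  fun s => (g s == r')%:R / #|[set s' : {perm 'I_N} | g s' == r']|%:R.

Definition prob_eq (T : eqType) (g : {perm 'I_N} -> T) (r' : T) : R :=
  #|[set s' : {perm 'I_N} | g s' == r']|%:R / (N`!)%:R.

End Defs.

From mathcomp Require Import all_boot all_order all_algebra all_fingroup.
From mathcomp Require Import reals exp.
From mathcomp Require Import ring lra zify.
Import Order.TTheory GRing.Theory Num.Theory.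
Local Open Scope ring_scope.

(* The conditioned distribution is uniform on A = g^-1(r').  Peel pieces off A
   greedily: as long as the current set B satisfies N! <= 2^(delta p) |B|, take
   a part S of maximal size among those that are "heavy" for B, i.e. with
   Pr_B[S] >= 2^(delta |S|) Pr_u[S] (the empty part is always heavy).  The
   uniform distribution on B restricted to S is then (p, delta) non-uniform
   with fixed part S: heaviness of S and the size bound on B give |S| <= p,
   and for a part S' distinct from S, the part S \cup S' is larger, hence not
   heavy, which divided by the heaviness of S is the required bound.  The
   leftover set L has 2^(2m) |L| < N! <= 2^m |A|, so its weight is below
   2^-m. *)

Lemma ler_ratio (R : numFieldType) (a b c d : R) :
  0 <= a -> 0 < d -> a <= b -> d <= c -> a / c <= b / d.
Proof.
move=> a0 d0 ab dc; apply: ler_pM => //; first by rewrite invr_ge0 (le_trans (ltW d0)).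
by rewrite lef_pV2 // posrE (lt_le_trans d0).
Qed.

Lemma natr_fact_gt0 (R : numDomainType) k : (0 : R) < k`!%:R.
Proof. by rewrite ltr0n fact_gt0. Qed.

Lemma ler_powR2 (R : realType) (x y : R) : (powR 2 x <= powR 2 y) = (x <= y).
Proof.
rewrite -(ler_ln (powR_gt0 _ _)) ?posrE ?powR_gt0 // !ln_powR.
by rewrite ler_pM2r // ln_gt0 // ltr1n.
Qed.

Section UniformOnSets.
Set Implicit Arguments. Unset Strict Implicit.
Variables (R : realType) (N : nat).
Implicit Types (B L P : {set {perm 'I_N}}) (Ps : seq {set {perm 'I_N}}).
Implicit Types (X S : {set 'I_N * 'I_N}).

Definition extensions X : {set {perm 'I_N}} := [set s | in_parts X s].

Definition unif_on P : {perm 'I_N} -> R := fun s => (s \in P)%:R / #|P|%:R.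

Lemma extensions0 : extensions set0 = [set: {perm 'I_N}].
Proof. by apply/setP => s; rewrite !inE; apply/forall_inP => xy; rewrite inE. Qed.

Lemma extensionsU X S : extensions (X :|: S) = extensions X :&: extensions S.
Proof.
apply/setP => s; rewrite !inE /in_parts.
apply/forall_inP/andP => [H | [/forall_inP H1 /forall_inP H2] xy].
  by split; apply/forall_inP => xy xyin; apply: H; rewrite inE xyin ?orbT.
by rewrite inE => /orP[]; [apply: H1 | apply: H2].
Qed.

Lemma sum_indicator (a : pred {perm 'I_N}) P :
  \sum_(s | a s) ((s \in P)%:R : R) = #|[set s in P | a s]|%:R.
Proof.
rewrite (eq_bigr (fun s => if s \in P then 1 else 0)); last by move=> s _; case: (s \in P).
rewrite -big_mkcondr /= sumr_const; congr (_ *+ _).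
by apply: eq_card => s; rewrite !inE andbC.
Qed.

Lemma card_indicator P : #|P|%:R = \sum_s ((s \in P)%:R : R).
Proof. by rewrite sum_indicator; congr (_%:R); apply: eq_card => s; rewrite !inE andbT. Qed.

Lemma prob_part_unif_on P X :
  prob_part (unif_on P) X = #|P :&: extensions X|%:R / #|P|%:R.
Proof.
rewrite /prob_part /unif_on -mulr_suml sum_indicator.
by congr (_%:R / _); apply: eq_card => s; rewrite !inE.
Qed.

Lemma perm_dist_unif_on P : P != set0 -> perm_dist (unif_on P).
Proof.
move=> P0; split => [s | ]; first by rewrite /unif_on divr_ge0.
rewrite /unif_on -mulr_suml -card_indicator divff //.
by rewrite pnatr_eq0 -lt0n card_gt0.
Qed.

Lemma mul_card_unif_on P s : #|P|%:R * unif_on P s = (s \in P)%:R.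
Proof.
rewrite /unif_on mulrCA; have [-> | P0] := eqVneq P set0.
  by rewrite inE cards0 !mul0r.
by rewrite divff ?mulr1 // pnatr_eq0 -lt0n card_gt0.
Qed.

Lemma card_extensions_le X : is_part X -> (#|extensions X| <= (N - #|X|)`!)%N.
Proof.
case/existsP => s0 Hs0; set I := [set xy.1 | xy in X].
have cardI : #|I| = #|X|.
  apply: card_in_imset => -[a1 a2] [b1 b2] aX bX /= eab.
  have /eqP := forall_inP Hs0 _ aX; have /eqP := forall_inP Hs0 _ bX.
  by rewrite /= eab => <- <-.
have sub : [set (s * s0^-1)%g | s in extensions X] \subset perm_on (~: I).
  apply/subsetP => _ /imsetP [s sX ->]; apply/subsetP => x; rewrite inE in sX; rewrite !inE.
  apply: contra => /imsetP [xy xyX ->]; rewrite permM.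
  have /eqP -> := forall_inP sX xy xyX.
  by have /eqP <- := forall_inP Hs0 xy xyX; rewrite permK.
rewrite -(card_imset _ (mulIg s0^-1%g)); apply: (leq_trans (subset_leq_card sub)).
by rewrite card_perm cardsCs setCK card_ord cardI.
Qed.

Lemma card_of_indicator_sum B Ps L :
  (forall s, ((s \in B)%:R : R) = \sum_(P <- Ps) (s \in P)%:R + (s \in L)%:R) ->
  (#|B|%:R : R) = \sum_(P <- Ps) #|P|%:R + #|L|%:R.
Proof.
move=> hB; rewrite card_indicator (eq_bigr _ (fun s _ => hB s)) big_split /=.
rewrite -card_indicator exchange_big /=; congr (_ + _).
by apply: eq_bigr => P _; rewrite card_indicator.
Qed.

Lemma unif_on_mixture B Ps L s :
  (forall s, ((s \in B)%:R : R) = \sum_(P <- Ps) (s \in P)%:R + (s \in L)%:R) ->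
  unif_on B s = \sum_(P <- Ps) #|P|%:R / #|B|%:R * unif_on P s
                + #|L|%:R / #|B|%:R * unif_on L s.
Proof.
move=> hB; under eq_bigr do rewrite mulrAC mul_card_unif_on.
by rewrite mulrAC mul_card_unif_on -mulr_suml -mulrDl -hB.
Qed.

Section Heavy.
Variables (delta p : R).
Hypothesis delta_gt0 : 0 < delta.

Definition heavy B X : bool :=
  powR 2 (delta * #|X|%:R) * ((N - #|X|)`!%:R / N`!%:R)
    <= #|B :&: extensions X|%:R / #|B|%:R.

Lemma heavy0 B : B != set0 -> heavy B set0.
Proof.
move=> B0; rewrite /heavy cards0 mulr0 powRr0 subn0 mul1r extensions0 setIT.
by rewrite !divff ?gt_eqF ?natr_fact_gt0 // ltr0n card_gt0.
Qed.

Lemma heavy_card_gt0 B X : heavy B X -> (0 < #|B :&: extensions X|)%N.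
Proof.
rewrite /heavy lt0n; apply: contraTN => /eqP ->; rewrite mul0r -ltNge.
by rewrite mulr_gt0 ?powR_gt0 ?divr_gt0 ?natr_fact_gt0.
Qed.

Lemma heavy_is_part B X : heavy B X -> is_part X.
Proof.
move/heavy_card_gt0; rewrite card_gt0 => /set0Pn [s].
by rewrite !inE => /andP [_ sX]; apply/existsP; exists s.
Qed.

Lemma heavy_card_le B S :
  N`!%:R <= powR 2 (delta * p) * #|B|%:R -> heavy B S -> #|S|%:R <= p.
Proof.
move=> big hS; have P0 := heavy_card_gt0 hS.
have B0 : (0 < #|B|)%N := leq_trans P0 (subset_leq_card (subsetIl _ _)).
have cardP : #|B :&: extensions S|%:R <= ((N - #|S|)`!%:R : R).
  rewrite ler_nat; apply: leq_trans (card_extensions_le (heavy_is_part hS)).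
  exact/subset_leq_card/subsetIr.
have : powR 2 (delta * #|S|%:R) * ((N - #|S|)`!%:R / N`!%:R)
         <= (N - #|S|)`!%:R / #|B|%:R.
  by apply: le_trans hS _; rewrite ler_pM2r // invr_gt0 ltr0n.
set c := powR 2 _; set f := ((N - #|S|)`!%:R : R); set F := (N`!%:R : R).
have [f0 F0] : 0 < f /\ 0 < F by split; apply: natr_fact_gt0.
have b0 : (0 : R) < #|B|%:R by rewrite ltr0n.
have -> : c * (f / F) = c * #|B|%:R * (f / (F * #|B|%:R)) by field; rewrite !gt_eqF.
have -> : f / #|B|%:R = F * (f / (F * #|B|%:R)) by field; rewrite !gt_eqF.
rewrite ler_pM2r ?divr_gt0 ?mulr_gt0 // => small.
have := le_trans small big; rewrite ler_pM2r // ler_powR2 ler_pM2l //.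
Qed.

Lemma prob_part_piece_le B S S' :
  heavy B S -> ~~ heavy B (S :|: S') -> [disjoint S & S'] ->
  prob_part (unif_on (B :&: extensions S)) S'
    <= powR 2 (delta * #|S'|%:R) * unif_cond R S S'.
Proof.
move=> hS; have P0 := heavy_card_gt0 hS.
have B0 : (0 < #|B|)%N := leq_trans P0 (subset_leq_card (subsetIl _ _)).
rewrite /heavy -ltNge => light /disjoint_setI0 SS'0.
rewrite cardsU SS'0 cards0 subn0 subnDA natrD mulrDr powRD ?pnatr_eq0 ?implybT // in light.
rewrite prob_part_unif_on -setIA -extensionsU /unif_cond.
move: hS light; rewrite /heavy.
set a := (#|_ :&: extensions (_ :|: _)|%:R : R); set q := (#|_ :&: extensions S|%:R : R).
set b := (#|B|%:R : R); set c := powR 2 (delta * #|S|%:R); set d := powR 2 _.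
set e := ((N - #|S| - #|S'|)`!%:R : R); set f := ((N - #|S|)`!%:R : R).
set F := (N`!%:R : R) => hS light.
have [e0 f0 F0] : [/\ 0 < e, 0 < f & 0 < F] by split; apply: natr_fact_gt0.
have [b0 q0 c0] : [/\ 0 < b, 0 < q & 0 < c] by rewrite !ltr0n powR_gt0.
have -> : a / q = (a / b) / (q / b) by field; rewrite !gt_eqF.
have -> : d * (e / f) = (c * d * (e / F)) / (c * (f / F)) by field; rewrite !gt_eqF.
apply: ler_ratio (ltW light) hS; first by rewrite divr_ge0.
by rewrite !mulr_gt0 ?invr_gt0.
Qed.

Lemma heaviest_piece_nonuniform B S :
  N`!%:R <= powR 2 (delta * p) * #|B|%:R -> heavy B S ->
  (forall X, heavy B X -> (#|X| <= #|S|)%N) ->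
  pd_nonuniform p delta (unif_on (B :&: extensions S)).
Proof.
move=> big hS maxS; have P0 := heavy_card_gt0 hS.
exists S; split; first exact: heavy_is_part hS; first exact: heavy_card_le big hS.
  by rewrite prob_part_unif_on -setIA setIid divff // pnatr_eq0 -lt0n.
move=> S' _ /andP [/forall_inP distinct _].
have [-> | S'0] := eqVneq S' set0.
  rewrite prob_part_unif_on extensions0 setIT divff ?pnatr_eq0 -?lt0n //.
  by rewrite /unif_cond cards0 mulr0 powRr0 subn0 mul1r divff // gt_eqF ?natr_fact_gt0.
have SS' : [disjoint S & S'].
  apply/pred0P => xy /=; apply/negP => /andP [xyS xyS'].
  by have /forall_inP/(_ xy xyS) := distinct xy xyS'; rewrite eqxx.
apply: prob_part_piece_le => //; apply: contra S'0 => /maxS.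
rewrite cardsU (disjoint_setI0 SS') cards0 subn0 -[leqRHS]addn0 leq_add2l.
by rewrite leqn0 cards_eq0.
Qed.

Lemma greedy_decomposition B :
  exists (Ps : seq {set {perm 'I_N}}) (L : {set {perm 'I_N}}),
  [/\ powR 2 (delta * p) * #|L|%:R < N`!%:R,
      forall P, P \in Ps -> P != set0 /\ pd_nonuniform p delta (unif_on P) &
      forall s, ((s \in B)%:R : R) = \sum_(P <- Ps) (s \in P)%:R + (s \in L)%:R].
Proof.
have [k] := ubnP #|B|; elim: k B => // k IH B ltBk.
have [small | big] := ltP (powR 2 (delta * p) * #|B|%:R) N`!%:R.
  by exists [::], B; split => // s; rewrite big_nil add0r.
have B0 : B != set0.
  by apply: contraTneq big => ->; rewrite cards0 mulr0 -ltNge natr_fact_gt0.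
have [S hS maxS] := arg_maxnP (fun X => #|X|) (heavy0 B0).
have P0 := heavy_card_gt0 hS.
have [|Ps [L [smallL hPs hB]]] := IH (B :\: extensions S).
  by have := cardsID (extensions S) B; lia.
exists (B :&: extensions S :: Ps), L; split => //.
  move=> Q; rewrite inE => /predU1P [-> | /hPs //].
  by rewrite -card_gt0; split => //; exact: heaviest_piece_nonuniform.
move=> s; rewrite big_cons -addrA -hB !inE.
by case: (s \in B); case: (in_parts S s); rewrite ?addr0 ?add0r.
Qed.

End Heavy.
End UniformOnSets.

Lemma leftover_ratio_le (R : realFieldType) (l a F z : R) :
  0 < z -> 0 < F -> z * z * l < F -> z^-1 <= a / F -> l / a <= z^-1.
Proof.
move=> z0 F0 hl; rewrite ler_pdivlMr // mulrC ler_pdivrMr // => hF.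
have a0 : 0 < a by nra.
rewrite ler_pdivrMr // -(ler_pM2l z0) mulrA mulfV ?gt_eqF // mul1r; nra.
Qed.

Theorem mainTheorem7 (R : realType) (n : nat) (T : eqType)
  (g : {perm 'I_(2 ^ n)} -> T) (r' : T) (delta m : R) :
  0 < delta ->
  prob_eq R g r' >= powR 2 (- m) ->
  exists (k : nat) (F : 'I_k -> {perm 'I_(2 ^ n)} -> R) (alpha : 'I_k -> R)
         (F' : {perm 'I_(2 ^ n)} -> R) (gamma' : R),
    [/\ forall i, perm_dist (F i) /\ pd_nonuniform (2 * m / delta) delta (F i),
        perm_dist F',
        ((forall i, 0 <= alpha i) /\ 0 <= gamma') /\
        \sum_(i < k) alpha i + gamma' = 1,
        gamma' <= powR 2 (- m) &
        forall s, cond_unif R g r' s = \sum_(i < k) alpha i * F i s + gamma' * F' s].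
Proof.
move=> delta_gt0 hprob; set A := [set s | g s == r'].
have [Ps [L [smallL hPs hA]]] := greedy_decomposition (2 * m / delta) delta_gt0 A.
have A_gt0 : (0 : R) < #|A|%:R.
  by rewrite ltr0n lt0n; apply: contraTneq hprob => A0; rewrite -ltNge /prob_eq A0 mul0r powR_gt0.
pose weight (P : {set {perm 'I_(2 ^ n)}}) : R := #|P|%:R / #|A|%:R.
have sum_nth (G : {set {perm 'I_(2 ^ n)}} -> R) :
    \sum_(i < size Ps) G (nth set0 Ps i) = \sum_(P <- Ps) G P.
  by rewrite (big_nth set0) big_mkord.
exists (size Ps), (fun i => unif_on R (nth set0 Ps i)), (fun i => weight (nth set0 Ps i)),
  (unif_on R (if L == set0 then [set: _] else L)), (weight L).
split.
- move=> i; have [P0 Pnu] := hPs _ (mem_nth set0 (ltn_ord i)).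
  by split; first exact: perm_dist_unif_on.
- apply: perm_dist_unif_on; have [_ | //] := eqVneq L set0.
  by apply/set0Pn; exists 1%g; rewrite inE.
- split; first by split => [i|]; rewrite divr_ge0.
  by rewrite sum_nth -mulr_suml -mulrDl -(card_of_indicator_sum hA) divff ?gt_eqF.
- have delta_p : delta * (2 * m / delta) = m + m by field; rewrite gt_eqF.
  rewrite delta_p powRD ?pnatr_eq0 ?implybT // in smallL.
  rewrite powRN in hprob *; apply: leftover_ratio_le smallL hprob.
    exact: powR_gt0.
  exact: natr_fact_gt0.
- move=> s; have -> : cond_unif R g r' s = unif_on R A s by rewrite /unif_on inE.
  rewrite (unif_on_mixture _ hA) -(sum_nth (fun P => weight P * unif_on R P s)).
  congr (_ + _).
  by have [-> | //] := eqVneq L set0; rewrite /weight cards0 !mul0r.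
Qed.
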